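(* Let $G$ be a scheduling game on $m$ related machines (speeds $s_1,\dots,s_m>0$, arbitrary machine-dependent priority lists $\pi_1,\dots,\pi_m$) in which all jobs have the same processing-time function $p$, where either $p(t)=b+a t$ for all jobs ($b,a\ge 0$) or $p(t)=\max\{\tau,b-a t\}$ for all jobs ($b,a\ge0$, $\tau>0$). Run the following algorithm: set $\ell_j=0$ for all machines $j$; repeat, until all jobs are assigned: choose $j^\star\in\arg\min_j\big(\ell_j+p(\ell_j)/s_j\big)$, assign to machine $j^\star$ the unassigned job with highest priority in $\pi_{j^\star}$ (smallest $\pi_{j^\star}$-value), and set $\ell_{j^\star}\leftarrow \ell_{j^\star}+p(\ell_{j^\star})/s_{j^\star}$. Then the resulting profile is a pure Nash equilibrium of $G$.
   Context: Scheduling game: a finite set $N$ of $n\ge1$ jobs (players) and a set $M$ of $m\ge1$ machines. Machine $j$ has speed $s_j>0$ and a priority list $\pi_j$, a bijection $N\to\{1,\dots,n\}$; job $u$ has higher priority than $v$ on $j$ iff $\pi_j(u)<\pi_j(v)$. Each job $i$ has a processing-time function $p_i$: with positive deterioration $p_i(t)=b_i+a_it$ ($b_i,a_i\ge0$), with negative deterioration $p_i(t)=\max\{\tau_i,b_i-a_it\}$ ($b_i,a_i\ge0$, $\tau_i>0$). A profile $\sigma\in M^N$ assigns each job to a machine. On machine $j$, the jobs assigned to it, listed in increasing $\pi_j$-order as $i_1,i_2,\dots$, are processed without idle time: $S_{i_1}(\sigma)=0$, $C_{i_k}(\sigma)=S_{i_k}(\sigma)+p_{i_k}(S_{i_k}(\sigma))/s_j$,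 $S_{i_{k+1}}(\sigma)=C_{i_k}(\sigma)$. The cost of job $i$ is its completion time $C_i(\sigma)$. A pure Nash equilibrium (NE) is a profile in which no job can strictly decrease its completion time by unilaterally changing its machine. *)

From HB Require Import structures.
From mathcomp Require Import all_boot all_order all_algebra all_fingroup.
Set Implicit Arguments. Unset Strict Implicit. Unset Printing Implicit Defensive.
Import Order.TTheory GRing.Theory Num.Theory.
Local Open Scope ring_scope.

(* Machine j has speed s j and priority
   list pi j : {perm 'I_n}; job u has higher priority than v on j iff
   pi j u < pi j v (values in {0,..,n-1} instead of {1,..,n}). *)

Section Game.
Variables (R : realFieldType) (n m : nat).
Variables (p : 'I_n -> R -> R) (s : 'I_m -> R) (pi : 'I_m -> {perm 'I_n}).

Definition jobs_on (sigma : 'I_n -> 'I_m) (j : 'I_m) : seq 'I_n :=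
  sort (fun u v => (pi j u <= pi j v)%N) [seq k <- enum 'I_n | sigma k == j].

Definition process (j : 'I_m) (js : seq 'I_n) : R :=
  foldl (fun t k => t + p k t / s j) 0 js.

Definition completion (sigma : 'I_n -> 'I_m) (i : 'I_n) : R :=
  let j := sigma i in
  process j [seq k <- jobs_on sigma j | (pi j k <= pi j i)%N].

Definition deviate (sigma : 'I_n -> 'I_m) (i : 'I_n) (j : 'I_m) : 'I_n -> 'I_m :=
  fun k => if k == i then j else sigma k.

Definition is_NE (sigma : 'I_n -> 'I_m) : Prop :=
  forall (i : 'I_n) (j : 'I_m), completion sigma i <= completion (deviate sigma i j) i.

End Game.

(* Ties in the
   argmin are broken arbitrarily, so the algorithm is modelled as a
   (nondeterministic) reachability relation. *)
Section Algo.
Variables (R : realFieldType) (n m : nat).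
Variables (q : R -> R) (s : 'I_m -> R) (pi : 'I_m -> {perm 'I_n}).

Definition next_load (l : 'I_m -> R) (j : 'I_m) : R := l j + q (l j) / s j.

Inductive alg_reach : ('I_m -> R) -> ('I_n -> option 'I_m) -> Prop :=
| alg_start : alg_reach (fun _ => 0) (fun _ => None)
| alg_step (l : 'I_m -> R) (A : 'I_n -> option 'I_m) (jstar : 'I_m) (u : 'I_n) :
    alg_reach l A ->
    (forall j, next_load l jstar <= next_load l j) ->
    A u = None ->
    (forall v, A v = None -> (pi jstar u <= pi jstar v)%N) ->
    alg_reach (fun j => if j == jstar then next_load l jstar else l j)
              (fun k => if k == u then Some jstar else A k).

End Algo.

(* Since all jobs share q, the r-th job processed on machine j completes at
   load j r, the r-th iterate of t |-> t + q t / s j from 0, and load j is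
   nondecreasing in r because q >= 0 at nonnegative times.  So a job i on
   machine j completes at load j (1 + #jobs ahead of i on j), and after
   moving to j' it would complete at load j' (1 + #jobs on j' ahead of i in
   pi j').  The greedy algorithm keeps the former below the latter.  When it
   places u on j*, every job already placed on any j' precedes u in pi j', so
   for u the two sides are the next completion times on j* and on j', and j*
   minimises these.  An earlier job i on j precedes u in pi j, so its own
   position does not change, while its alternatives only get longer. *)
From HB Require Import structures.
From mathcomp Require Import all_boot all_order all_algebra all_fingroup.
Import Order.TTheory GRing.Theory Num.Theory.
Local Open Scope ring_scope.
Set Implicit Arguments.

Section Greedy.
Variables (R : realFieldType) (n m : nat) (q : R -> R) (s : 'I_m -> R)
  (pi : 'I_m -> {perm 'I_n}).
Hypothesis s_gt0 : forall j, 0 < s j.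
Hypothesis q_ge0 : forall t, 0 <= t -> 0 <= q t.

Definition load (j : 'I_m) (r : nat) : R := iter r (fun t => t + q t / s j) 0.

Lemma load_ge0 j r : 0 <= load j r.
Proof. by elim: r => //= r IH; rewrite addr_ge0 // divr_ge0 ?q_ge0 // ltW. Qed.

Lemma load_leS j r : load j r <= load j r.+1.
Proof. by rewrite /= lerDl divr_ge0 ?q_ge0 ?load_ge0 ?ltW. Qed.

Lemma load_mono j : {homo load j : r r' / (r <= r')%N >-> r <= r'}.
Proof. by apply: homo_leq (load_leS j) => // y x z; apply: le_trans. Qed.

Definition assigned (A : 'I_n -> option 'I_m) (j : 'I_m) : nat :=
  #|[pred k | A k == Some j]|.

Definition ahead (A : 'I_n -> option 'I_m) (j : 'I_m) (i : 'I_n) : nat :=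
  #|[pred k | (k != i) && (A k == Some j) && (pi j k <= pi j i)%N]|.

Lemma eq_ahead A A' j i :
  (forall k, k != i -> A k = A' k) -> ahead A j i = ahead A' j i.
Proof.
move=> eqAA'; apply: eq_card => k; rewrite !inE.
by case: (altP (k =P i)) => //= /eqAA' ->.
Qed.

Lemma process_load j (js : seq 'I_n) : process (fun=> q) s j js = load j (size js).
Proof.
rewrite /process /load; elim: js 0 => //= k js IH t.
by rewrite IH -iterSr.
Qed.

Lemma completion_ahead (sigma : 'I_n -> 'I_m) i :
  completion (fun=> q) s pi sigma i =
  load (sigma i) (ahead (Some \o sigma) (sigma i) i).+1.
Proof.
have count_enumE (P : pred 'I_n) : count P (enum 'I_n) = #|P|.
  by rewrite cardE -size_filter /enum_mem filter_predT.
rewrite /completion process_load size_filter /jobs_on.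
rewrite (seq.permP (introT permPl (perm_sort _ _))) count_filter count_enumE.
rewrite (cardD1 i) !inE eqxx leqnn; congr (load _ _.+1); apply: eq_card => k.
by rewrite !inE (inj_eq (@Some_inj _)) -andbA [X in _ = _ && X]andbC.
Qed.

(* The third clause is the Nash condition for the jobs placed so far; the
   second records that the greedy order respects every priority list. *)
Definition greedy_inv (l : 'I_m -> R) (A : 'I_n -> option 'I_m) : Prop :=
  [/\ forall j, l j = load j (assigned A j),
      forall i j v, A i = Some j -> A v = None -> (pi j i <= pi j v)%N &
      forall i j j', A i = Some j ->
        load j (ahead A j i).+1 <= load j' (ahead A j' i).+1].

Section Step.
Variables (l : 'I_m -> R) (A : 'I_n -> option 'I_m) (jstar : 'I_m) (u : 'I_n).
Hypothesis Au : A u = None.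
Hypothesis u_first : forall v, A v = None -> (pi jstar u <= pi jstar v)%N.
Hypothesis inv : greedy_inv l A.

Let A' k := if k == u then Some jstar else A k.

Let A'_assigned k j : A k = Some j -> A' k = Some j.
Proof. by rewrite /A'; case: eqP => [->|//]; rewrite Au. Qed.

Lemma assigned_step j :
  assigned A' j = ((jstar == j) + assigned A j)%N.
Proof.
rewrite /assigned (cardD1 u) [#|[pred k | A k == _]|](cardD1 u) !inE /A' eqxx Au.
by congr (_ + _)%N; apply: eq_card => k; rewrite !inE; case: eqP.
Qed.

Lemma ahead_step_mono j i : (ahead A j i <= ahead A' j i)%N.
Proof.
apply: subset_leq_card; apply/subsetP => k; rewrite !inE.
by case/andP=> /andP[-> /eqP /A'_assigned ->] ->; rewrite eqxx.
Qed.

Lemma ahead_step_placed i j : i != u -> A i = Some j -> ahead A' j i = ahead A j i.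
Proof.
have [_ prio _] := inv; move=> iu Ai; apply: eq_card => k; rewrite !inE /A'.
case: (altP (k =P u)) => [->|//]; rewrite eq_sym (negbTE iu) Au /=.
case: eqP => // -[ej]; subst j; apply/negbTE; rewrite -ltnNge.
by rewrite ltn_neqAle prio // andbT (inj_eq val_inj) (inj_eq perm_inj).
Qed.

Lemma ahead_step_new j : ahead A' j u = assigned A j.
Proof.
have [_ prio _] := inv; apply: eq_card => k; rewrite !inE /A'.
case: (altP (k =P u)) => [->|ku] /=; first by rewrite Au.
by case: (altP (A k =P Some j)) => //= /prio ->.
Qed.

Lemma greedy_inv_step :
  (forall j, next_load q s l jstar <= next_load q s l j) ->
  greedy_inv (fun j => if j == jstar then next_load q s l jstar else l j) A'.
Proof.
have [loadE prio stable] := inv; move=> jstar_min; split.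
- move=> j; rewrite assigned_step eq_sym.
  by case: eqP => [->|_]; rewrite /next_load loadE.
- move=> i j v; rewrite /A'; case: (eqVneq v u) => [->|_]; first by case: (i == u).
  by case: (eqVneq i u) => [-> [<-]|_ Ai] Av; [exact: u_first | exact: prio Ai Av].
- move=> i j j'; rewrite {1}/A'; case: (altP (i =P u)) => [-> [<-]|iu Ai].
    by rewrite !ahead_step_new; have := jstar_min j'; rewrite /next_load !loadE.
  rewrite ahead_step_placed //.
  apply: le_trans (stable i j j' Ai) (load_mono j' _).
  by rewrite ltnS ahead_step_mono.
Qed.

End Step.

Lemma greedy_inv_reach l A : alg_reach q s pi l A -> greedy_inv l A.
Proof.
elim=> {l A} [|l A jstar u _ inv jstar_min Au u_first].
  by split=> // j; rewrite /assigned eq_card0.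
exact: greedy_inv_step.
Qed.

End Greedy.

Theorem theorem1 (R : realFieldType) (n m : nat) (q : R -> R)
  (s : 'I_m -> R) (pi : 'I_m -> {perm 'I_n}) :
  (0 < n)%N -> (0 < m)%N ->
  (forall j, 0 < s j) ->
  ((exists b a : R, [/\ 0 <= b, 0 <= a & forall t, q t = b + a * t]) \/
   (exists b a tau : R, [/\ 0 <= b, 0 <= a, 0 < tau &
                          forall t, q t = Num.max tau (b - a * t)])) ->
  forall (l : 'I_m -> R) (A : 'I_n -> option 'I_m) (sigma : 'I_n -> 'I_m),
    alg_reach q s pi l A ->
    (forall i, A i = Some (sigma i)) ->
    is_NE (fun _ : 'I_n => q) s pi sigma.
Proof.
move=> _ _ s_gt0 q_shape l A sigma reach A_sigma i j.
have q_ge0 t : 0 <= t -> 0 <= q t.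
  case: q_shape => [[b [a [b0 a0 ->]]]|[b [a [tau [_ _ tau0 ->]]]]] t0.
    by rewrite addr_ge0 // mulr_ge0.
  by rewrite le_max ltW.
have [_ _ stable] := greedy_inv_reach s_gt0 q_ge0 reach.
have aheadE sg j' : (forall k, k != i -> sg k = sigma k) ->
    ahead pi (Some \o sg) j' i = ahead pi A j' i.
  by move=> sg_sigma; apply: eq_ahead => k /sg_sigma /= ->.
rewrite !completion_ahead !aheadE //; last by move=> k ki; rewrite /deviate (negbTE ki).
by rewrite /deviate eqxx; exact: stable (A_sigma i).
Qed.
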